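(* Let $r\ge2$ be an integer and $\psi\in C_p(\mathbb{R})$. Assume there exist constants $m>0$ and $\alpha\ge0$ such that (i) $m\,d(x)\le\psi(x)$ for all $x\in[0,1]$, and (ii) $\Delta_{n,k}(y;\psi)\le\alpha$ for all $n\in\mathbb{N}_0$, $k\in\{0,1,\dots,r^n-1\}$, $y\in(0,1)$. If $2mr>\alpha$, then $U_\psi\in\mathcal{P}_c$ with $c=\frac{2mr-\alpha}{2(r-1)}$.
   Context: $C_p(\mathbb{R})$ denotes the set of all continuous functions $f:\mathbb{R}\to\mathbb{R}$ periodic with period $1$ with $f(0)=0$; $\mathbb{N}_0=\mathbb{N}\cup\{0\}$. $d(x)=\min\{|x-z|:z\in\mathbb{Z}\}$. For $\psi\in C_p(\mathbb{R})$, $U_\psi(x)=\sum_{j=0}^\infty r^{-j}\psi(r^jx)$. For $f\in C_p(\mathbb{R})$ and $(n,k,y)\in\mathbb{N}_0\times\mathbb{Z}\times(0,1)$: $\delta^+_{n,k}(y;f)=\dfrac{f(\frac{k+1}{r^n})-f(\frac{k+y}{r^n})}{\frac{1-y}{r^n}}$, $\delta^-_{n,k}(y;f)=\dfrac{f(\frac{k+y}{r^n})-f(\frac{k}{r^n})}{\frac{y}{r^n}}$, $\Delta_{n,k}(y;f)=2r^n(\delta^+_{n,k}(y;f)-\delta^-_{n,k}(y;f))$. For $c>0$, $\mathcal{P}_c$ is the set of $f\in C_p(\mathbb{R})$ with $\delta^+_{n,k}(y;f)-\delta^-_{n,k}(y;f)\le-c$ for all $(n,k,y)\in\mathbb{N}_0\times\mathbb{Z}\times(0,1)$.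 *)

From Stdlib Require Import Reals ZArith.
From Coquelicot Require Import Coquelicot.
Open Scope R_scope.

Definition Cp (f : R -> R) : Prop :=
  continuity f /\ (forall x, f (x + 1) = f x) /\ f 0 = 0.

(* d(x) = min{|x - z| : z in Z} = min(frac x, 1 - frac x) *)
Definition dist_Z (x : R) : R := Rmin (frac_part x) (1 - frac_part x).

Definition U (r : nat) (psi : R -> R) (x : R) : R :=
  Series (fun j : nat => / (INR r ^ j) * psi (INR r ^ j * x)).

Definition delta_plus (r n : nat) (k : Z) (y : R) (f : R -> R) : R :=
  (f ((IZR k + 1) / INR r ^ n) - f ((IZR k + y) / INR r ^ n)) / ((1 - y) / INR r ^ n).

Definition delta_minus (r n : nat) (k : Z) (y : R) (f : R -> R) : R :=
  (f ((IZR k + y) / INR r ^ n) - f (IZR k / INR r ^ n)) / (y / INR r ^ n).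

Definition Delta_nk (r n : nat) (k : Z) (y : R) (f : R -> R) : R :=
  2 * INR r ^ n * (delta_plus r n k y f - delta_minus r n k y f).

Definition Pc (r : nat) (c : R) (f : R -> R) : Prop :=
  Cp f /\ forall (n : nat) (k : Z) (y : R), 0 < y < 1 ->
    delta_plus r n k y f - delta_minus r n k y f <= - c.

(* Write F = U_psi.  It satisfies F(x) = psi(x) + F(rx)/r, and the gap
   D_n = delta^+_{n,k} - delta^-_{n,k} is additive along this equation:
   D_{n+1}(F) = D_{n+1}(psi) + D_n(F), while D_0(F)(y) = -F(y)/(y(1-y)) by
   periodicity.  Summing the geometric bounds D_j(psi) <= alpha/(2 r^j) gives
   D_n(F) <= alpha/(2(r-1)) - F(y)/(y(1-y)).  It remains to show
   F(y) >= m r/(r-1) y(1-y): with g(x) = {x}(1-{x}), the function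
   W = F - m r/(r-1) g satisfies W(rx) <= r W(x) because of the elementary
   inequality r g(x) <= (r-1) d(x) + g(rx), and a function bounded below with
   this property is nonnegative. *)

From Stdlib Require Import Reals ZArith Lra Lia.
From Coquelicot Require Import Coquelicot.
Open Scope R_scope.

Lemma frac_part_id (x : R) : 0 <= x < 1 -> frac_part x = x.
Proof.
  intros Hx. symmetry. apply (proj2 (Int_part_frac_part_spec x 0 x Hx ltac:(ring))).
Qed.

Lemma frac_part_add_IZR (x : R) (z : Z) : frac_part (x + IZR z) = frac_part x.
Proof.
  symmetry. apply (Int_part_frac_part_spec _ (Int_part x + z)).
  - destruct (base_fp x); lra.
  - rewrite plus_IZR. pose proof (Rplus_Int_part_frac_part x). lra.
Qed.

Lemma periodic_IZR (f : R -> R) : (forall x, f (x + 1) = f x) ->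
  forall (z : Z) (x : R), f (x + IZR z) = f x.
Proof.
  intros Hf z. induction z as [|z IH|z IH] using Z.peano_ind; intros x.
  - now rewrite Rplus_0_r.
  - rewrite succ_IZR, <- Rplus_assoc, Hf. apply IH.
  - rewrite <- Hf, <- (IH x). f_equal. rewrite <- Z.sub_1_r, minus_IZR. ring.
Qed.

Lemma periodic_frac_part (f : R -> R) : (forall x, f (x + 1) = f x) ->
  forall x, f x = f (frac_part x).
Proof.
  intros Hf x. rewrite <- (periodic_IZR f Hf (Int_part x) (frac_part x)). f_equal.
  unfold frac_part. ring.
Qed.

Lemma periodic_continuity_bounded (f : R -> R) :
  continuity f -> (forall x, f (x + 1) = f x) -> exists M, forall x, Rabs (f x) <= M.
Proof.
  intros Hc Hf.
  destruct (continuity_ab_maj f 0 1 ltac:(lra) (fun c _ => Hc c)) as [xmax [Hmax _]].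
  destruct (continuity_ab_min f 0 1 ltac:(lra) (fun c _ => Hc c)) as [xmin [Hmin _]].
  exists (Rmax (f xmax) (- f xmin)). intros x.
  rewrite (periodic_frac_part f Hf x). destruct (base_fp x).
  specialize (Hmax (frac_part x) ltac:(lra)). specialize (Hmin (frac_part x) ltac:(lra)).
  apply Rabs_le. split.
  - pose proof (Rmax_r (f xmax) (- f xmin)). lra.
  - pose proof (Rmax_l (f xmax) (- f xmin)). lra.
Qed.

Lemma dist_Z_nonneg (x : R) : 0 <= dist_Z x.
Proof. unfold dist_Z. destruct (base_fp x). apply Rmin_glb; lra. Qed.

Lemma periodic_ge_dist_Z (f : R -> R) (m : R) : (forall x, f (x + 1) = f x) ->
  (forall x, 0 <= x <= 1 -> m * dist_Z x <= f x) -> forall x, m * dist_Z x <= f x.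
Proof.
  intros Hp Hf x. destruct (base_fp x).
  assert (Hd : dist_Z (frac_part x) = dist_Z x)
    by (unfold dist_Z; rewrite frac_part_id by lra; reflexivity).
  rewrite (periodic_frac_part f Hp x), <- Hd. apply Hf. lra.
Qed.

Definition U_term (r : nat) (psi : R -> R) (j : nat) (x : R) : R :=
  / INR r ^ j * psi (INR r ^ j * x).

Lemma U_periodic (r : nat) (psi : R -> R) : (forall x, psi (x + 1) = psi x) ->
  forall x, U r psi (x + 1) = U r psi x.
Proof.
  intros Hp x. apply Series_ext. intros j. f_equal.
  replace (INR r ^ j * (x + 1)) with (INR r ^ j * x + IZR (Z.of_nat (r ^ j))).
  - apply periodic_IZR, Hp.
  - rewrite <- INR_IZR_INZ, pow_INR. ring.
Qed.

Lemma U_zero (r : nat) (psi : R -> R) : psi 0 = 0 -> U r psi 0 = 0.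
Proof.
  intros H0. transitivity (0 * U r psi 0); [|ring].
  unfold U. rewrite <- Series_scal_l. apply Series_ext. intros j.
  rewrite Rmult_0_r, H0. ring.
Qed.

Section Series_U.

Variables (r : nat) (psi : R -> R) (M : R).
Hypothesis r_ge2 : (2 <= r)%nat.
Hypothesis psi_bounded : forall x, Rabs (psi x) <= M.

Let INR_r_ge2 : 2 <= INR r.
Proof. apply le_INR in r_ge2. simpl in r_ge2. lra. Qed.

Lemma U_term_bound (j : nat) (x : R) : Rabs (U_term r psi j x) <= M * (/ INR r) ^ j.
Proof.
  unfold U_term. rewrite Rabs_mult, Rabs_pos_eq, pow_inv, Rmult_comm.
  - apply Rmult_le_compat_r; [left; apply Rinv_0_lt_compat, pow_lt; lra | apply psi_bounded].
  - left; apply Rinv_0_lt_compat, pow_lt; lra.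
Qed.

Lemma ex_series_U_majorant : ex_series (fun j => M * (/ INR r) ^ j).
Proof.
  apply (ex_series_scal_l M (fun j => (/ INR r) ^ j)), ex_series_geom.
  rewrite Rabs_pos_eq; [|left; apply Rinv_0_lt_compat; lra].
  rewrite <- Rinv_1. apply Rinv_lt_contravar; lra.
Qed.

Lemma ex_series_U_term (x : R) : ex_series (fun j => U_term r psi j x).
Proof.
  apply (@ex_series_le R_AbsRing R_CompleteNormedModule _ _ (fun j => U_term_bound j x)).
  exact ex_series_U_majorant.
Qed.

Lemma U_functional_eq (x : R) : U r psi x = psi x + / INR r * U r psi (INR r * x).
Proof.
  unfold U. rewrite Series_incr_1 by apply ex_series_U_term.
  rewrite <- Series_scal_l. simpl. rewrite Rinv_1, !Rmult_1_l.
  f_equal. apply Series_ext. intros j.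
  rewrite Rinv_mult, Rmult_assoc. f_equal. f_equal. f_equal. ring.
Qed.

Lemma U_nonneg : (forall x, 0 <= psi x) -> forall x, 0 <= U r psi x.
Proof.
  intros Hnn x. replace 0 with (0 * U r psi x) by ring. unfold U. rewrite <- Series_scal_l.
  apply Series_le; [|apply ex_series_U_term].
  intros j. assert (0 <= / INR r ^ j) by (left; apply Rinv_0_lt_compat, pow_lt; lra).
  specialize (Hnn (INR r ^ j * x)). split; nra.
Qed.

Lemma U_continuity : continuity psi -> continuity (U r psi).
Proof.
  intros Hc.
  assert (HM : 0 <= M) by (apply Rle_trans with (Rabs (psi 0)); [apply Rabs_pos | auto]).
  assert (cv : forall x, {l | Un_cv (fun N => SP (U_term r psi) N x) l}).
  { intros x. exists (U r psi x). apply is_series_Reals, Series_correct, ex_series_U_term. }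
  assert (Hcvn : CVN_R (U_term r psi)).
  { intros rho. exists (fun j => M * (/ INR r) ^ j), (Series (fun j => M * (/ INR r) ^ j)).
    split.
    - apply (Un_cv_ext (fun n => sum_f_R0 (fun j => M * (/ INR r) ^ j) n)).
      + intros n. apply sum_eq. intros j _. symmetry. apply Rabs_pos_eq.
        apply Rmult_le_pos; [exact HM | apply pow_le; left; apply Rinv_0_lt_compat; lra].
      + apply is_series_Reals, Series_correct, ex_series_U_majorant.
    - intros j y _. apply U_term_bound. }
  assert (Hterm : forall j, continuity (U_term r psi j)).
  { intros j x. unfold U_term. reg. }
  intros x. apply (continuity_pt_ext (SFL (U_term r psi) cv)).
  2:{ apply (SFL_continuity _ cv Hcvn Hterm). }
  intros y. unfold SFL. destruct (cv y) as [l Hl]. apply (UL_sequence _ _ _ Hl).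
  apply is_series_Reals, Series_correct, ex_series_U_term.
Qed.

End Series_U.

Definition delta_diff (r n : nat) (k : Z) (y : R) (f : R -> R) : R :=
  delta_plus r n k y f - delta_minus r n k y f.

Lemma delta_diff_functional_eq (r : nat) (F psi : R -> R) : (0 < r)%nat ->
  (forall x, F x = psi x + / INR r * F (INR r * x)) ->
  forall n k y, 0 < y < 1 ->
  delta_diff r (S n) k y F = delta_diff r (S n) k y psi + delta_diff r n k y F.
Proof.
  intros Hr HF n k y Hy. apply lt_INR in Hr. simpl in Hr.
  assert (0 < INR r ^ n) by (apply pow_lt; lra).
  assert (Hlevel : forall t,
    F (t / INR r ^ S n) = psi (t / INR r ^ S n) + / INR r * F (t / INR r ^ n)).
  { intros t. rewrite HF. do 3 f_equal. simpl. field. lra. }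
  unfold delta_diff, delta_plus, delta_minus. rewrite !Hlevel. simpl. field. lra.
Qed.

Lemma delta_diff_level0 (r : nat) (F : R -> R) : (forall x, F (x + 1) = F x) -> F 0 = 0 ->
  forall k y, 0 < y < 1 -> delta_diff r 0 k y F = - F y / (y * (1 - y)).
Proof.
  intros Hp H0 k y Hy. unfold delta_diff, delta_plus, delta_minus. simpl. rewrite !Rdiv_1_r.
  rewrite (Rplus_comm (IZR k)), (Rplus_comm (IZR k) y), !(periodic_IZR F Hp).
  rewrite <- (Rplus_0_l (IZR k)), (periodic_IZR F Hp), <- (Rplus_0_l 1), Hp, H0.
  field. lra.
Qed.

Lemma delta_diff_mod (r n : nat) (k : Z) (y : R) (f : R -> R) : (0 < r)%nat ->
  (forall x, f (x + 1) = f x) ->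
  delta_diff r n k y f = delta_diff r n (k mod Z.of_nat (r ^ n)) y f.
Proof.
  intros Hr Hp. set (N := Z.of_nat (r ^ n)).
  assert (HNR : IZR N = INR r ^ n) by (unfold N; rewrite <- INR_IZR_INZ, pow_INR; reflexivity).
  assert (HN : 0 < INR r ^ n) by (apply pow_lt, lt_0_INR, Hr).
  assert (HNpos : (N <> 0)%Z) by (intros E; rewrite E in HNR; simpl in HNR; lra).
  assert (Hshift : forall t, f ((IZR k + t) / INR r ^ n) = f ((IZR (k mod N) + t) / INR r ^ n)).
  { intros t. rewrite <- (periodic_IZR f Hp (k / N) ((IZR (k mod N) + t) / INR r ^ n)). f_equal.
    rewrite (Z.div_mod k N HNpos) at 1. rewrite plus_IZR, mult_IZR, HNR. field. lra. }
  assert (Hshift0 : f (IZR k / INR r ^ n) = f (IZR (k mod N) / INR r ^ n)).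
  { rewrite <- (Rplus_0_r (IZR k)), <- (Rplus_0_r (IZR (k mod N))). apply Hshift. }
  unfold delta_diff, delta_plus, delta_minus. rewrite !Hshift, Hshift0. reflexivity.
Qed.

Lemma delta_diff_le_of_Delta (r : nat) (f : R -> R) (alpha : R) : (0 < r)%nat ->
  (forall x, f (x + 1) = f x) ->
  (forall (n : nat) (k : Z) (y : R),
      (0 <= k < Z.of_nat (r ^ n)%nat)%Z -> 0 < y < 1 -> Delta_nk r n k y f <= alpha) ->
  forall n k y, 0 < y < 1 -> delta_diff r n k y f <= alpha / 2 * (/ INR r) ^ n.
Proof.
  intros Hr Hp HDelta n k y Hy.
  assert (HN : 0 < INR r ^ n) by (apply pow_lt, lt_0_INR, Hr).
  assert (HNZ : (0 < Z.of_nat (r ^ n))%Z)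
    by (apply lt_IZR; rewrite <- INR_IZR_INZ, pow_INR; exact HN).
  pose proof (HDelta n _ y (Z.mod_pos_bound k _ HNZ) Hy) as Hk. unfold Delta_nk in Hk.
  rewrite (delta_diff_mod r n k y f Hr Hp), pow_inv. unfold delta_diff.
  apply (Rmult_le_reg_l (2 * INR r ^ n)); [lra|].
  replace (2 * INR r ^ n * (alpha / 2 * / INR r ^ n)) with alpha by (field; lra).
  exact Hk.
Qed.

Lemma telescoping_geometric_bound (a b : nat -> R) (c q : R) : 0 <= c -> 0 <= q < 1 ->
  (forall n, a (S n) = b (S n) + a n) -> (forall n, b (S n) <= c * q ^ S n) ->
  forall n, a n <= a 0%nat + c * q / (1 - q).
Proof.
  intros Hc Hq Ha Hb.
  assert (Hpartial : forall n, a n <= a 0%nat + c * q * (1 - q ^ n) / (1 - q)).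
  { induction n as [|n IH].
    - simpl. replace (c * q * (1 - 1) / (1 - q)) with 0 by (field; lra). lra.
    - rewrite Ha. specialize (Hb n).
      replace (c * q * (1 - q ^ S n) / (1 - q)) with (c * q * (1 - q ^ n) / (1 - q) + c * q ^ S n)
        by (simpl; field; lra).
      lra. }
  intros n. specialize (Hpartial n).
  assert (0 <= c * q * q ^ n / (1 - q)).
  { apply Rdiv_le_0_compat; [apply Rmult_le_pos; [apply Rmult_le_pos|apply pow_le]; lra | lra]. }
  replace (c * q / (1 - q)) with (c * q * (1 - q ^ n) / (1 - q) + c * q * q ^ n / (1 - q))
    by (field; lra).
  lra.
Qed.

Lemma nonneg_of_rescaling (a B : R) (W : R -> R) : 1 < a ->
  (forall x, - B <= W x) -> (forall x, W (a * x) <= a * W x) -> forall x, 0 <= W x.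
Proof.
  intros Ha HB Hresc x.
  assert (Hiter : forall N x, W (a ^ N * x) <= a ^ N * W x).
  { induction N as [|N IH]; intros z.
    - simpl. rewrite !Rmult_1_l. lra.
    - replace (a ^ S N * z) with (a ^ N * (a * z)) by (simpl; ring).
      apply Rle_trans with (a ^ N * W (a * z)); [apply IH|].
      replace (a ^ S N * W z) with (a ^ N * (a * W z)) by (simpl; ring).
      apply Rmult_le_compat_l; [apply pow_le; lra | apply Hresc]. }
  destruct (Rle_lt_dec 0 (W x)) as [Hnonneg|Hneg]; [exact Hnonneg|exfalso].
  destruct (Pow_x_infinity a ltac:(rewrite Rabs_pos_eq; lra) ((B + 1) / - W x)) as [N HN].
  specialize (HN N (le_n N)). rewrite Rabs_pos_eq in HN by (apply pow_le; lra).
  assert (B + 1 <= a ^ N * - W x).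
  { apply Rge_le in HN. apply (Rmult_le_compat_r (- W x)) in HN; [|lra].
    unfold Rdiv in HN. rewrite Rmult_assoc, Rinv_l, Rmult_1_r in HN by lra. exact HN. }
  specialize (Hiter N x). specialize (HB (a ^ N * x)). lra.
Qed.

Definition frac_parabola (x : R) : R := frac_part x * (1 - frac_part x).

Lemma frac_parabola_bounds (x : R) : 0 <= frac_parabola x <= 1.
Proof. unfold frac_parabola. destruct (base_fp x). split; nra. Qed.

Lemma frac_parabola_rescale_unit (r : nat) (y : R) : (1 <= r)%nat -> 0 <= y < 1 ->
  INR r * (y * (1 - y)) <= (INR r - 1) * Rmin y (1 - y) + frac_parabola (INR r * y).
Proof.
  intros Hr Hy. apply le_INR in Hr. simpl in Hr.
  pose proof (frac_parabola_bounds (INR r * y)) as [Hg _].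
  unfold Rmin. destruct (Rle_dec y (1 - y)) as [Hlow|Hhigh].
  - destruct (Rlt_dec (INR r * y) 1) as [Hry|Hry].
    + unfold frac_parabola. rewrite frac_part_id by nra.
      assert (0 <= (INR r - 1) * y * (1 - INR r * y)) by (apply Rmult_le_pos; nra). nra.
    + assert (0 <= y * (INR r * y - 1)) by (apply Rmult_le_pos; lra). nra.
  - destruct (Rle_dec (INR r * y) (INR r - 1)) as [Hry|Hry].
    + assert (0 <= (1 - y) * (INR r - 1 - INR r * y)) by (apply Rmult_le_pos; lra). nra.
    + unfold frac_parabola.
      replace (INR r * y) with (INR r * y - (INR r - 1) + IZR (Z.of_nat r - 1)).
      2:{ rewrite minus_IZR, <- INR_IZR_INZ. ring. }
      rewrite frac_part_add_IZR, frac_part_id by nra.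
      assert (0 <= (1 - y) * (INR r - 1) * (INR r * y - (INR r - 1))) by (apply Rmult_le_pos; nra).
      nra.
Qed.

Lemma frac_parabola_add_IZR (x : R) (z : Z) : frac_parabola (x + IZR z) = frac_parabola x.
Proof. unfold frac_parabola. now rewrite frac_part_add_IZR. Qed.

Lemma frac_parabola_rescale (r : nat) (x : R) : (1 <= r)%nat ->
  INR r * frac_parabola x <= (INR r - 1) * dist_Z x + frac_parabola (INR r * x).
Proof.
  intros Hr. destruct (base_fp x).
  replace (INR r * x) with (INR r * frac_part x + IZR (Int_part x * Z.of_nat r)).
  2:{ rewrite mult_IZR, <- INR_IZR_INZ. unfold frac_part. ring. }
  rewrite frac_parabola_add_IZR.
  apply frac_parabola_rescale_unit; [exact Hr | lra].
Qed.

Lemma parabola_le_of_functional_eq (r : nat) (F psi : R -> R) (m : R) :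
  (2 <= r)%nat -> 0 <= m -> (forall x, 0 <= F x) ->
  (forall x, F x = psi x + / INR r * F (INR r * x)) ->
  (forall x, m * dist_Z x <= psi x) ->
  forall x, m * INR r / (INR r - 1) * frac_parabola x <= F x.
Proof.
  intros Hr Hm HF Hrec Hpsi x.
  assert (H2 : 2 <= INR r) by (apply le_INR in Hr; simpl in Hr; lra).
  set (K := m * INR r / (INR r - 1)).
  assert (HK : 0 <= K) by (apply Rdiv_le_0_compat; nra).
  cut (0 <= F x - K * frac_parabola x); [lra|].
  apply (nonneg_of_rescaling (INR r) K (fun z => F z - K * frac_parabola z)); [lra| |].
  - intros z. pose proof (frac_parabola_bounds z). pose proof (HF z). nra.
  - intros z. simpl.
    pose proof (frac_parabola_rescale r z ltac:(lia)) as Hkey.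
    assert (HrF : INR r * F z = INR r * psi z + F (INR r * z)) by (rewrite Hrec at 1; field; lra).
    assert (HKd : K * (INR r - 1) * dist_Z z = m * INR r * dist_Z z)
      by (unfold K; field; lra).
    assert (0 <= K * ((INR r - 1) * dist_Z z + frac_parabola (INR r * z) - INR r * frac_parabola z))
      by (apply Rmult_le_pos; lra).
    assert (INR r * (m * dist_Z z) <= INR r * psi z)
      by (apply Rmult_le_compat_l; [lra | apply Hpsi]).
    lra.
Qed.

Lemma delta_diff_le_of_parabola (r : nat) (F psi : R -> R) (alpha K : R) :
  (2 <= r)%nat -> 0 <= alpha ->
  (forall x, F (x + 1) = F x) -> F 0 = 0 ->
  (forall x, F x = psi x + / INR r * F (INR r * x)) ->
  (forall n k y, 0 < y < 1 -> delta_diff r n k y psi <= alpha / 2 * (/ INR r) ^ n) ->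
  (forall x, K * frac_parabola x <= F x) ->
  forall n k y, 0 < y < 1 -> delta_diff r n k y F <= alpha / (2 * (INR r - 1)) - K.
Proof.
  intros Hr Ha Hp H0 Hrec Hpsi Hpar n k y Hy.
  assert (H2 : 2 <= INR r) by (apply le_INR in Hr; simpl in Hr; lra).
  assert (Hq : 0 <= / INR r < 1).
  { split; [left; apply Rinv_0_lt_compat; lra|].
    rewrite <- Rinv_1. apply Rinv_lt_contravar; lra. }
  pose proof (telescoping_geometric_bound
    (fun j => delta_diff r j k y F) (fun j => delta_diff r j k y psi) (alpha / 2) (/ INR r)
    ltac:(lra) Hq (fun j => delta_diff_functional_eq r F psi ltac:(lia) Hrec j k y Hy)
    (fun j => Hpsi (S j) k y Hy) n) as Htel.
  simpl in Htel. rewrite (delta_diff_level0 r F Hp H0 k y Hy) in Htel.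
  specialize (Hpar y). unfold frac_parabola in Hpar. rewrite frac_part_id in Hpar by lra.
  assert (Hyy : 0 < y * (1 - y)) by nra.
  assert (K <= F y / (y * (1 - y))).
  { apply (Rmult_le_reg_r (y * (1 - y))); [exact Hyy|].
    unfold Rdiv. rewrite Rmult_assoc, Rinv_l, Rmult_1_r by lra. lra. }
  replace (alpha / (2 * (INR r - 1))) with (alpha / 2 * / INR r / (1 - / INR r)) by (field; lra).
  unfold Rdiv in *. lra.
Qed.

Theorem theorem3p5 (r : nat) (psi : R -> R) (m alpha : R) :
  (2 <= r)%nat -> Cp psi -> 0 < m -> 0 <= alpha ->
  (forall x, 0 <= x <= 1 -> m * dist_Z x <= psi x) ->
  (forall (n : nat) (k : Z) (y : R),
      (0 <= k < Z.of_nat (r ^ n)%nat)%Z -> 0 < y < 1 -> Delta_nk r n k y psi <= alpha) ->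
  2 * m * INR r > alpha ->
  Pc r ((2 * m * INR r - alpha) / (2 * (INR r - 1))) (U r psi).
Proof.
  (* [2 m r > alpha] only makes c positive; the bound itself does not need it. *)
  intros Hr [psi_cont [psi_per psi_0]] Hm Ha Hlow HDelta _.
  assert (H2 : 2 <= INR r) by (apply le_INR in Hr; simpl in Hr; lra).
  pose proof (periodic_ge_dist_Z psi m psi_per Hlow) as psi_ge.
  assert (psi_nonneg : forall x, 0 <= psi x).
  { intros x. apply Rle_trans with (m * dist_Z x); [|apply psi_ge].
    apply Rmult_le_pos; [lra | apply dist_Z_nonneg]. }
  destruct (periodic_continuity_bounded psi psi_cont psi_per) as [M HM].
  pose proof (U_functional_eq r psi M Hr HM) as U_eq.
  split; [split; [|split]|].
  - exact (U_continuity r psi M Hr HM psi_cont).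
  - exact (U_periodic r psi psi_per).
  - exact (U_zero r psi psi_0).
  - intros n k y Hy.
    eapply Rle_trans.
    + apply (delta_diff_le_of_parabola r (U r psi) psi alpha (m * INR r / (INR r - 1)) Hr Ha
        (U_periodic r psi psi_per) (U_zero r psi psi_0) U_eq
        (delta_diff_le_of_Delta r psi alpha ltac:(lia) psi_per HDelta)
        (parabola_le_of_functional_eq r (U r psi) psi m Hr ltac:(lra)
           (U_nonneg r psi M Hr HM psi_nonneg) U_eq psi_ge) n k y Hy).
    + right. field. lra.
Qed.
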